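(* Let $(H,\mathcal P)$ be a hypergraph colouring instance with pinnings, $H=(V,\mathcal E)$ with maximum degree $\Delta$, and let $k'\le k$ be integers with $k'\ge 2$ such that $k'\le|e|\le k$ for every $e\in\mathcal E$. Let $t\ge k$ and $q\ge(\mathrm e t\Delta)^{\frac{1}{k'-1}}$. Then for every $v\in V$ and every colour $c\in[q]$, $$\frac1q\Big(1-\frac1t\Big)\le\Pr_{\sigma\sim\mu_{\mathcal C}}[\sigma(v)=c]\le\frac1q\Big(1+\frac4t\Big).$$
   Context: A hypergraph $H=(V,\mathcal E)$ has finite vertex set $V$ and hyperedges $\mathcal E\subseteq 2^V$; its maximum degree $\Delta$ is the maximum number of hyperedges containing a single vertex. For $q\in\mathbb N$, a hypergraph colouring instance with pinnings is a pair $(H,\mathcal P)$ with $\mathcal P=\{P_e\subseteq[q]:e\in\mathcal E\}$. A colouring $\sigma\in[q]^V$ is proper if $|\{\sigma(u):u\in e\}\cup P_e|>1$ for every $e\in\mathcal E$. $\mathcal C$ is the set of proper colourings and $\mu_{\mathcal C}$ the uniform distribution on $\mathcal C$. $\mathrm e$ denotes Euler's number. *)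

From HB Require Import structures.
From mathcomp Require Import all_boot all_order all_algebra.
From mathcomp Require Import all_classical all_reals all_analysis.
Set Implicit Arguments. Unset Strict Implicit. Unset Printing Implicit Defensive.
Import Order.TTheory GRing.Theory Num.Theory.

(* A hypergraph on a finite vertex type V is given by its set of hyperedges
   E : {set {set V}}; pinnings P assign to each hyperedge a set of colours in
   [q] = 'I_q. *)

Definition hdeg (V : finType) (E : {set {set V}}) (v : V) : nat :=
  #|[set e in E | v \in e]|.

Definition maxdeg (V : finType) (E : {set {set V}}) : nat :=
  \max_(v : V) hdeg E v.

Definition proper_col (V : finType) (q : nat) (E : {set {set V}})
    (P : {set V} -> {set 'I_q}) (sigma : {ffun V -> 'I_q}) : bool :=
  [forall e in E, 1 < #|[set sigma u | u in e] :|: P e|].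

Definition proper_cols (V : finType) (q : nat) (E : {set {set V}})
    (P : {set V} -> {set 'I_q}) : {set {ffun V -> 'I_q}} :=
  [set sigma | proper_col E P sigma].

Definition prob_colour (R : realType) (V : finType) (q : nat)
    (E : {set {set V}}) (P : {set V} -> {set 'I_q}) (v : V) (c : 'I_q) : R :=
  (#|[set sigma in proper_cols E P | sigma v == c]|%:R
     / #|proper_cols E P|%:R)%R.

(* Counting form of the Lovász local lemma, with x = 1/(t Δ).  By induction on
   |G|, for every set G of edges and every edge f, at most a fraction x of the
   colourings proper on G violate f: the colourings proper on the edges
   disjoint from f do not constrain the colours on f, so f is monochromatic
   for at most a fraction q^(1 - |f|) <= x (1 - x)^(|Γ(f)| - 1) of them, and
   adding back each of the < |Γ(f)| edges of G meeting f keeps at least a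
   fraction 1 - x of the colourings.  The same argument shows that the proper
   colourings constant on a vertex set S are at most a fraction
   q^(-|S|) (1 - x)^(-|Γ(S)|) of all proper colourings.
   With S = {v} this is the upper bound, as (1 - x)^(deg v) >= 1 - 1/t.  For
   the lower bound, recolouring v with c is injective up to the q choices of
   the old colour, and yields a proper colouring unless some edge e through v
   is c-monochromatic on e \ {v}; by the bound with S = e \ {v} each of these
   at most Δ events has probability at most x, hence total at most 1/t. *)

From HB Require Import structures.
From mathcomp Require Import all_boot all_order all_algebra.
From mathcomp Require Import reals sequences exp unstable.
From mathcomp Require Import ring lra zify.
Import Order.TTheory GRing.Theory Num.Theory.
Set Implicit Arguments. Unset Strict Implicit. Unset Printing Implicit Defensive.

Section Colourings.

Variables (V : finType) (q : nat) (P : {set V} -> {set 'I_q}).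
Local Notation colouring := {ffun V -> 'I_q}.

Definition monochrome (S : {set V}) (c : 'I_q) : {set colouring} :=
  [set s : colouring | [forall u in S, s u == c]].

Lemma monochrome1 v c : monochrome [set v] c = [set s : colouring | s v == c].
Proof.
apply/setP => s; rewrite !inE; apply/forallP/idP => [/(_ v)|/eqP s_v u].
  by rewrite inE eqxx.
by rewrite inE; apply/implyP => /eqP->; rewrite s_v.
Qed.

Definition splice (S : {set V}) (g s : colouring) : colouring :=
  [ffun u => if u \in S then g u else s u].

Definition indep_of (S : {set V}) (G : {set colouring}) : Prop :=
  forall g s, s \in G -> splice S g s \in G.

(* (s, g) |-> splice S g s is injective on (G :&: monochrome S c) times the
   q ^ #|S| colourings equal to c off S. *)
Lemma card_monochrome_indep (S : {set V}) (G : {set colouring}) c :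
  indep_of S G -> #|G :&: monochrome S c| * q ^ #|S| <= #|G|.
Proof.
move=> GS; pose D := [set g : colouring in pffun_on c S [set: 'I_q]].
have cardD : #|D| = q ^ #|S| by rewrite cardsE card_pffun_on cardsT card_ord.
have splice_inj : {in setX (G :&: monochrome S c) D &,
    injective (fun p => splice S p.2 p.1)}.
  move=> [s g] [s' g']; rewrite !inE /=.
  move=> /andP[/andP[_ /forallP sc] /pffun_onP[/supportP gc _]].
  move=> /andP[/andP[_ /forallP s'c] /pffun_onP[/supportP g'c _]] /ffunP eq_s.
  congr pair; apply/ffunP => u; have := eq_s u; rewrite !ffunE.
  - case: ifPn => // uS _.
    by move: (sc u) (s'c u); rewrite uS => /eqP -> /eqP ->.
  - by case: ifPn => // uS _; rewrite gc // g'c.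
rewrite -cardD -cardsX -(card_in_imset splice_inj) subset_leq_card //.
by apply/subsetP => _ /imsetP[[s g] /setXP[/setIP[sG _] _] ->]; apply: GS.
Qed.

Lemma proper_colsU (E1 E2 : {set {set V}}) :
  proper_cols (E1 :|: E2) P = proper_cols E1 P :&: proper_cols E2 P.
Proof.
apply/setP => s; rewrite !inE /proper_col.
apply/forallP/andP => [s_proper|[/forallP s_proper1 /forallP s_proper2] e].
  split; apply/forallP => e; apply/implyP => eE.
    by have := s_proper e; rewrite inE eE.
  by have := s_proper e; rewrite inE eE orbT.
apply/implyP; rewrite inE => /orP[eE|eE].
  exact: (implyP (s_proper1 e)).
exact: (implyP (s_proper2 e)).
Qed.

Lemma proper_cols_subset (E1 E2 : {set {set V}}) :
  E1 \subset E2 -> proper_cols E2 P \subset proper_cols E1 P.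
Proof. by move=> /setUidPr <-; rewrite proper_colsU subsetIl. Qed.

Definition violating (f : {set V}) : {set colouring} := ~: proper_cols [set f] P.

Lemma proper_colsU1 (f : {set V}) (F : {set {set V}}) :
  #|proper_cols F P| =
    #|proper_cols (f |: F) P| + #|proper_cols F P :&: violating f|.
Proof.
by rewrite -(cardsID (proper_cols [set f] P)) proper_colsU setIC /violating -setDE.
Qed.

Lemma proper_colsI_violating (f : {set V}) (F : {set {set V}}) :
  f \in F -> proper_cols F P :&: violating f = set0.
Proof.
move=> fF; apply/eqP; rewrite /violating -setDE setD_eq0.
by apply: proper_cols_subset; rewrite sub1set.
Qed.

Lemma violating_monochrome (f : {set V}) (s : colouring) u :
  s \in violating f -> u \in f -> s \in monochrome f (s u).
Proof.
rewrite !inE /proper_col => /forallPn[e].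
rewrite negb_imply inE => /andP[/eqP-> small] uf.
have /card_le1_eqP s_const : #|[set s w | w in f]| <= 1.
  by apply: leq_trans (subset_leq_card (subsetUl _ (P f))) _; rewrite leqNgt.
by apply/forallP => w; apply/implyP => wf; apply/eqP/s_const; apply: imset_f.
Qed.

Lemma card_violating_indep (f : {set V}) (G : {set colouring}) :
  0 < #|f| -> indep_of f G -> #|G :&: violating f| * q ^ #|f| <= q * #|G|.
Proof.
move=> /card_gt0P[u uf] Gf.
have cover : G :&: violating f \subset \bigcup_(c : 'I_q) (G :&: monochrome f c).
  apply/subsetP => s /setIP[sG sf]; apply/bigcupP; exists (s u) => //.
  by rewrite inE sG violating_monochrome.
apply: leq_trans (leq_mul (leq_trans (subset_leq_card cover)
  (card_big_setU _ _ _)) (leqnn _)) _.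
rewrite big_distrl /= -[X in _ <= X * _]card_ord -sum_nat_const.
by apply: leq_sum => c _; apply: card_monochrome_indep.
Qed.

Definition avoiding (F : {set {set V}}) (S : {set V}) : {set {set V}} :=
  [set e in F | [disjoint e & S]].

Definition incident (F : {set {set V}}) (S : {set V}) : {set {set V}} :=
  [set e in F | ~~ [disjoint e & S]].

Lemma avoiding_incident (F : {set {set V}}) (S : {set V}) :
  avoiding F S :|: incident F S = F.
Proof. by apply/setP => e; rewrite !inE -andb_orr orbN andbT. Qed.

Lemma disjoint_avoiding_incident (F : {set {set V}}) (S : {set V}) :
  [disjoint avoiding F S & incident F S].
Proof.
by rewrite -setI_eq0; apply/eqP/setP => e; rewrite !inE andbACA andbN andbF.
Qed.

Lemma avoiding_subset (F : {set {set V}}) (S : {set V}) : avoiding F S \subset F.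
Proof. by rewrite -{2}(avoiding_incident F S) subsetUl. Qed.

Lemma indep_proper_cols_avoiding (F : {set {set V}}) (S : {set V}) :
  indep_of S (proper_cols (avoiding F S) P).
Proof.
move=> g s; rewrite !inE /proper_col => /forallP s_proper.
apply/forallP => e; apply/implyP => eA; have := implyP (s_proper e) eA.
have eS : [disjoint e & S] by move: eA; rewrite inE => /andP[].
congr (_ < #|_ :|: _|); apply: eq_in_imset => u ue.
by rewrite ffunE (disjointFr eS ue).
Qed.

Lemma card_incident (F : {set {set V}}) (S : {set V}) :
  #|incident F S| <= #|S| * maxdeg F.
Proof.
have cover : incident F S \subset \bigcup_(u in S) [set e in F | u \in e].
  apply/subsetP => e; rewrite inE => /andP[eF /pred0Pn[u /andP[ue uS]]].
  by apply/bigcupP; exists u => //; rewrite inE eF.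
apply: leq_trans (subset_leq_card cover) _.
apply: leq_trans (card_big_setU _ _ _) _.
by rewrite -sum_nat_const; apply: leq_sum => u _; apply: leq_bigmax.
Qed.

Lemma card_incident1 (F : {set {set V}}) v : #|incident F [set v]| = hdeg F v.
Proof. by apply: eq_card => e; rewrite !inE disjoint_sym disjoints1 negbK. Qed.

Lemma card_incident_lt (F G : {set {set V}}) (f : {set V}) :
  G \subset F -> f \in F -> f \notin G -> 0 < #|f| ->
  #|incident G f| < #|incident F f|.
Proof.
move=> GF fF fG /card_gt0P[u uf]; apply: proper_card; apply/properP; split.
  by apply/subsetP => e; rewrite !inE => /andP[eG ->]; rewrite (subsetP GF).
exists f; last by rewrite inE (negbTE fG).
by rewrite inE fF -setI_eq0 setIid; apply/set0Pn; exists u.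
Qed.

Lemma splice_proper (E : {set {set V}}) v c (s : colouring) :
  s \in proper_cols E P ->
  (forall e, e \in E -> v \in e -> s \notin monochrome (e :\ v) c) ->
  splice [set v] [ffun => c] s \in proper_cols E P.
Proof.
rewrite !inE /proper_col => /forallP s_proper not_mono.
apply/forallP => e; apply/implyP => eE; have := implyP (s_proper e) eE.
case ve : (v \in e); last first.
  congr (_ < #|_ :|: _|); apply: eq_in_imset => u ue; rewrite ffunE inE.
  by case: eqP => // uv; move: ve; rewrite -uv ue.
have := not_mono e eE ve; rewrite inE => /forallPn[u].
rewrite negb_imply in_setD1 => /andP[/andP[uv ue] scu] _.
apply: leq_trans (subset_leq_card (_ : [set c; s u] \subset _)).
  by rewrite cards2 ltnS lt0b eq_sym.
apply/subsetP => w; rewrite !inE => /orP[]/eqP->; apply/orP; left; apply/imsetP;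
  [exists v | exists u]; by rewrite ?ffunE ?inE ?eqxx ?(negbTE uv).
Qed.

Lemma card_proper_cols_recolour (E : {set {set V}}) v c :
  #|proper_cols E P| <= q * #|proper_cols E P :&: monochrome [set v] c|
    + \sum_(e in E | v \in e) #|proper_cols E P :&: monochrome (e :\ v) c|.
Proof.
set G := proper_cols E P.
set B := \bigcup_(e in E | v \in e) monochrome (e :\ v) c.
rewrite -(cardsID B G) addnC leq_add //; last first.
  apply: leq_trans (card_big_setU _ _ _); apply: subset_leq_card.
  apply/subsetP => s /setIP[sG /bigcupP[e ve se]].
  by apply/bigcupP; exists e => //; apply/setIP.
have recolour_inj :
    injective (fun s : colouring => (s v, splice [set v] [ffun => c] s)).
  move=> s s' [sv /ffunP eq_s]; apply/ffunP => u; have := eq_s u.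
  by rewrite !ffunE inE; case: eqP => [->|].
have -> : q * #|G :&: monochrome [set v] c| =
    #|setX [set: 'I_q] (G :&: monochrome [set v] c)|.
  by rewrite cardsX cardsT card_ord.
rewrite -(card_imset _ recolour_inj).
apply: subset_leq_card; apply/subsetP => _ /imsetP[s /setDP[sG sB] ->].
apply/setXP; split; first exact: in_setT.
apply/setIP; split.
  apply: splice_proper => // e eE ve; apply: contra sB => es.
  by apply/bigcupP; exists e; rewrite ?eE.
by rewrite inE; apply/forallP => u; apply/implyP => uv; rewrite !ffunE uv.
Qed.

End Colourings.

Local Open Scope ring_scope.

Section LocalLemma.

Variables (V : finType) (q : nat) (P : {set V} -> {set 'I_q}).
Variables (R : realType) (x : R).
Hypothesis x01 : 0 <= x <= 1.

Definition violation_bounded (G : {set {set V}}) (f : {set V}) : Prop :=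
  #|proper_cols G P :&: violating P f|%:R <= x * #|proper_cols G P|%:R.

Lemma card_proper_colsU_ge (F H : {set {set V}}) :
  [disjoint F & H] ->
  (forall X : {set {set V}}, X \proper F :|: H ->
     forall f, f \in H -> violation_bounded X f) ->
  (1 - x) ^+ #|H| * #|proper_cols F P|%:R <= #|proper_cols (F :|: H) P|%:R.
Proof.
have /andP[_ x_le1] := x01.
move cardH : #|H| => n; elim: n H cardH => [|n IHn] H cardH FH bounded.
  by move/cards0_eq: cardH => ->; rewrite setU0 expr0 mul1r.
have [f fH] : exists f, f \in H by apply/card_gt0P; rewrite cardH.
set X := F :|: H :\ f.
have defFH : F :|: H = f |: X by rewrite setUCA setD1K.
have fX : f \notin X by rewrite !inE eqxx (disjointFl FH fH).
have X_ge : (1 - x) ^+ n * #|proper_cols F P|%:R <= #|proper_cols X P|%:R.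
  apply: IHn.
  - by move: cardH; rewrite (cardsD1 f H) fH => -[].
  - by apply: disjointWr FH; apply: subsetDl.
  move=> Y YX g; rewrite inE => /andP[_ gH]; apply: bounded gH.
  by apply: proper_sub_trans YX _; rewrite defFH subsetUr.
have X_bounded : violation_bounded X f.
  apply: bounded fH; rewrite defFH; apply/properP.
  by split; [apply: subsetUr | exists f; rewrite ?setU11].
have splitX : #|proper_cols X P|%:R =
    #|proper_cols (f |: X) P|%:R + #|proper_cols X P :&: violating P f|%:R :> R.
  by rewrite (proper_colsU1 P f X) natrD.
rewrite defFH exprS -mulrA.
apply: le_trans (ler_wpM2l _ X_ge) _; first by rewrite subr_ge0.
by move: X_bounded; rewrite /violation_bounded mulrBl mul1r; lra.
Qed.

Lemma card_proper_cols_avoiding (G : {set {set V}}) (S : {set V}) :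
  (forall X : {set {set V}}, X \proper G ->
     forall f, f \in G -> violation_bounded X f) ->
  (1 - x) ^+ #|incident G S| * #|proper_cols (avoiding G S) P|%:R
    <= #|proper_cols G P|%:R.
Proof.
move=> bounded; have := card_proper_colsU_ge (disjoint_avoiding_incident G S).
rewrite avoiding_incident; apply => X XG f; rewrite inE => /andP[fG _].
exact: bounded.
Qed.

Hypothesis q_gt0 : (0 < q)%N.

Variable E : {set {set V}}.
Hypothesis local_condition : forall f, f \in E ->
  (0 < #|f|)%N /\ q%:R <= x * (1 - x) ^+ (#|incident E f|.-1) * q%:R ^+ #|f|.

Lemma violation_bounded_step (G : {set {set V}}) f :
  G \subset E -> f \in E -> f \notin G ->
  (forall X : {set {set V}}, X \proper G ->
     forall g, g \in G -> violation_bounded X g) ->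
  violation_bounded G f.
Proof.
move=> GE fE fG bounded; have /andP[x_ge0 x_le1] := x01.
have [f_gt0 local_f] := local_condition fE.
set A := avoiding G f; set I := incident G f.
have A_indep := card_violating_indep P f_gt0 (@indep_proper_cols_avoiding _ _ P G f).
have A_chain := card_proper_cols_avoiding f bounded.
have I_lt := card_incident_lt GE fE fG f_gt0.
have decay : (1 - x) ^+ #|incident E f|.-1 <= (1 - x) ^+ #|I|.
  by apply: ler_wiXn2l; rewrite ?subr_ge0 ?gerBl // -ltnS (ltn_predK I_lt).
set Qf : R := q%:R ^+ #|f|.
have Qf_gt0 : 0 < Qf by rewrite exprn_gt0 // ltr0n.
rewrite /violation_bounded -(ler_pM2r Qf_gt0).
apply: (@le_trans _ _ (q%:R * #|proper_cols A P|%:R)).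
  apply: le_trans (_ : #|proper_cols A P :&: violating P f|%:R * Qf <= _).
    rewrite ler_pM2r // ler_nat.
    by apply/subset_leq_card/setSI/proper_cols_subset/avoiding_subset.
  by rewrite /Qf -natrX -!natrM ler_nat.
apply: le_trans (ler_wpM2r (ler0n _ _) local_f) _.
apply: le_trans (_ : x * (1 - x) ^+ #|I| * Qf * #|proper_cols A P|%:R <= _).
  apply: ler_wpM2r; first exact: ler0n.
  by apply: ler_wpM2r; [exact: ltW | exact: ler_wpM2l].
rewrite -!mulrA; apply: ler_wpM2l => //.
by rewrite mulrCA [_ * Qf]mulrC; apply: ler_wpM2l; [exact: ltW | exact: A_chain].
Qed.

Lemma counting_local_lemma (G : {set {set V}}) f :
  G \subset E -> f \in E -> violation_bounded G f.
Proof.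
have /andP[x_ge0 _] := x01.
elim: {G}_.+1 {-2}G (ltnSn #|G|) f => // n IHn G ltGn f GE fE.
have [fG|fG] := boolP (f \in G).
  by rewrite /violation_bounded proper_colsI_violating // cards0 mulr_ge0.
apply: violation_bounded_step => // X XG g gG.
apply: IHn; first exact: leq_trans (proper_card XG) ltGn.
  exact: subset_trans (proper_sub XG) GE.
exact: subsetP GE g gG.
Qed.

Let proper_subsets_bounded (X : {set {set V}}) (XE : X \proper E) f
  (fE : f \in E) : violation_bounded X f := counting_local_lemma (proper_sub XE) fE.

Lemma card_monochrome_proper_cols (S : {set V}) c :
  (1 - x) ^+ #|incident E S| * q%:R ^+ #|S|
    * #|proper_cols E P :&: monochrome S c|%:R <= #|proper_cols E P|%:R.
Proof.
have /andP[_ x_le1] := x01.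
apply: le_trans (card_proper_cols_avoiding S proper_subsets_bounded).
rewrite -mulrA; apply: ler_wpM2l; first by rewrite exprn_ge0 // subr_ge0.
apply: (@le_trans _ _
  (#|proper_cols (avoiding E S) P :&: monochrome S c| * q ^ #|S|)%:R).
  rewrite natrM natrX mulrC; apply: ler_wpM2r; first by rewrite exprn_ge0.
  by rewrite ler_nat; apply/subset_leq_card/setSI/proper_cols_subset/avoiding_subset.
by rewrite ler_nat card_monochrome_indep //; apply: indep_proper_cols_avoiding.
Qed.

Lemma card_proper_cols_gt0 : x < 1 -> (0 < #|proper_cols E P|)%N.
Proof.
move=> x_lt1.
have := @card_proper_colsU_ge set0 E; rewrite set0U -setI_eq0 set0I eqxx.
move=> /(_ isT proper_subsets_bounded).
have -> : proper_cols set0 P = setT.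
  by apply/setP => s; rewrite !inE; apply/forallP => e; rewrite inE.
rewrite cardsT card_ffun card_ord -(ltr0n R); apply: lt_le_trans.
by rewrite mulr_gt0 ?exprn_gt0 ?subr_gt0 // ltr0n expn_gt0 q_gt0.
Qed.

End LocalLemma.

Lemma bernoulli_ineq (R : realType) (x : R) (m : nat) :
  x <= 1 -> 1 - m%:R * x <= (1 - x) ^+ m.
Proof.
move=> x_le1; elim: m => [|m IHm]; first by rewrite mul0r subr0 expr0.
rewrite exprS; apply: le_trans (ler_wpM2l _ IHm); last by rewrite subr_ge0.
have : 0 <= m%:R * (x * x) by rewrite mulr_ge0 ?ler0n // -expr2 sqr_ge0.
rewrite -natr1; nra.
Qed.

Lemma expRN1_le_decay (R : realType) (n : R) (m : nat) :
  1 < n -> m%:R <= n - 1 -> expR (-1) <= (1 - n^-1) ^+ m.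
Proof.
move=> n_gt1 m_le.
have n1_gt0 : 0 < n - 1 by lra.
have -> : 1 - n^-1 = (1 + (n - 1)^-1)^-1.
  by field; rewrite !gt_eqF //; lra.
rewrite exprVn expRN lef_pV2 ?posrE ?expR_gt0 ?exprn_gt0 //; last first.
  by rewrite ltr_pwDr // invr_gt0.
apply: le_trans (_ : expR (n - 1)^-1 ^+ m <= _).
  apply: lerXn2r; last exact: expR_ge1Dx.
  - by rewrite nnegrE addr_ge0 // invr_ge0 ltW.
  - by rewrite nnegrE expR_ge0.
by rewrite -expRM_natl ler_expR ler_pdivrMr // mul1r.
Qed.

Lemma lll_weight_ge1 (R : realType) (X Q : R) (m : nat) :
  1 < X -> m%:R <= X - 1 -> expR 1 * X <= Q -> 1 <= X^-1 * (1 - X^-1) ^+ m * Q.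
Proof.
move=> X_gt1 m_le XQ; have X_gt0 : 0 < X by lra.
have one : X^-1 * expR (-1) * (expR 1 * X) = 1.
  by rewrite expRN; field; rewrite !gt_eqF ?expR_gt0.
rewrite -[Y in Y <= _]one.
apply: ler_pM => //.
- by rewrite mulr_ge0 ?invr_ge0 ?expR_ge0 ?ltW.
- by rewrite mulr_ge0 ?expR_ge0 ?ltW.
- by apply: ler_wpM2l; [rewrite invr_ge0 ltW | exact: expRN1_le_decay].
Qed.

Lemma le_exprn_of_powR_root (R : realType) (a b : R) (n : nat) :
  0 <= a -> (0 < n)%N -> powR a (1 / n%:R) <= b -> a <= b ^+ n.
Proof.
move=> a_ge0 n_gt0 root_le.
have : powR a (1 / n%:R) ^+ n <= b ^+ n.
  by apply: lerXn2r; rewrite ?nnegrE ?powR_ge0 // (le_trans (powR_ge0 _ _) root_le).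
by rewrite -powR_mulrn ?powR_ge0 // -powRrM div1r mulVf ?powRr1 // pnatr_eq0 -lt0n.
Qed.

Section MarginalBounds.

Variables (R : realType) (V : finType) (q : nat).
Variables (E : {set {set V}}) (P : {set V} -> {set 'I_q}) (k' k : nat) (t : R).
Hypotheses (k'_ge2 : (2 <= k')%N) (k'_le_k : (k' <= k)%N).
Hypothesis edge_size : forall e, e \in E -> (k' <= #|e| <= k)%N.
Hypothesis k_le_t : k%:R <= t.
Hypothesis q_gt0 : (0 < q)%N.
Hypothesis q_large : expR 1 * t * (maxdeg E)%:R <= q%:R ^+ k'.-1.

Local Notation D := (maxdeg E).
Local Notation N := #|proper_cols E P|.
(* When D = 0 there are no edges, and x = 0^-1 = 0 is harmless. *)
Let x : R := (t * D%:R)^-1.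

Let t_ge2 : 2 <= t.
Proof. by apply: le_trans k_le_t; rewrite ler_nat; lia. Qed.

Let edge_gt0 e : e \in E -> (0 < #|e|)%N.
Proof. by move/edge_size; lia. Qed.

Let maxdeg_gt0 e : e \in E -> (0 < D)%N.
Proof.
move=> eE; have /card_gt0P[u ue] := edge_gt0 eE.
by apply: leq_trans (leq_bigmax u); apply/card_gt0P; exists e; rewrite inE eE.
Qed.

Let x_ge0 : 0 <= x.
Proof. by rewrite invr_ge0 mulr_ge0 ?ler0n //; have := t_ge2; lra. Qed.

Let x_lt1 : x < 1.
Proof.
have := t_ge2; have [D0|D_gt0] := posnP D; first by rewrite /x D0 mulr0 invr0.
have : 1 <= D%:R :> R by rewrite ler1n.
by move=> D_ge1 t2; rewrite /x invf_lt1; nra.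
Qed.

Let maxdeg_x : D%:R * x <= t^-1.
Proof.
have [D0|D_gt0] := posnP D; first by rewrite D0 mul0r invr_ge0; have := t_ge2; lra.
by rewrite /x invfM mulrCA mulfV ?mulr1 // pnatr_eq0 -lt0n.
Qed.

Let weight_ge1 (m j : nat) : (0 < D)%N -> (k'.-1 <= j)%N -> (m < k * D)%N ->
  1 <= x * (1 - x) ^+ m * q%:R ^+ j.
Proof.
move=> D_gt0 j_ge m_lt.
have D_ge1 : 1 <= D%:R :> R by rewrite ler1n.
have t2 := t_ge2; rewrite /x; apply: lll_weight_ge1.
- by nra.
- have : m%:R + 1 <= k%:R * D%:R :> R by rewrite -natrM natr1 ler_nat.
  have : k%:R * D%:R <= t * D%:R by rewrite ler_wpM2r ?ler0n.
  lra.
- rewrite mulrA; apply: le_trans q_large _.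
  by apply: ler_weXn2l j_ge; rewrite ler1n.
Qed.

Let local_condition f : f \in E ->
  (0 < #|f|)%N /\ q%:R <= x * (1 - x) ^+ (#|incident E f|.-1) * q%:R ^+ #|f|.
Proof.
move=> fE; split; first exact: edge_gt0.
rewrite -(prednK (edge_gt0 fE)) exprS mulrCA -[leLHS]mulr1 ler_wpM2l ?ler0n //.
apply: weight_ge1; first exact: maxdeg_gt0 fE.
- by have := edge_size fE; lia.
- have kD_gt0 : (0 < k * D)%N by rewrite muln_gt0 (maxdeg_gt0 fE); lia.
  have : (#|incident E f| <= k * D)%N.
    apply: leq_trans (card_incident E f) _; rewrite leq_mul2r.
    by have /andP[_ ->] := edge_size fE; rewrite orbT.
  lia.
Qed.

Let x01 : 0 <= x <= 1.
Proof. by rewrite x_ge0 ltW. Qed.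

Let card_edge_monochrome e v c : e \in E -> v \in e ->
  #|proper_cols E P :&: monochrome (e :\ v) c|%:R <= x * N%:R.
Proof.
move=> eE ve; set S := e :\ v.
have S_card : #|S| = #|e|.-1 by rewrite [#|e|](cardsD1 v) ve.
have weight : 1 <= x * (1 - x) ^+ #|incident E S| * q%:R ^+ #|S|.
  apply: weight_ge1; first exact: maxdeg_gt0 eE.
  - by rewrite S_card; have := edge_size eE; lia.
  - apply: leq_ltn_trans (card_incident E S) _.
    by rewrite ltn_pmul2r ?(maxdeg_gt0 eE) // S_card; have := edge_size eE; lia.
have := card_monochrome_proper_cols P x01 q_gt0 local_condition S c.
set M := #|_ :&: monochrome S c|%:R => core.
apply: le_trans (_ : M * (x * (1 - x) ^+ #|incident E S| * q%:R ^+ #|S|) <= _).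
  by rewrite -[leLHS]mulr1 ler_wpM2l ?ler0n.
by rewrite mulrC -!mulrA; apply: ler_wpM2l => //; rewrite !mulrA.
Qed.

Let card_proper_cols_upper v c :
  #|proper_cols E P :&: monochrome [set v] c|%:R * q%:R * (1 - t^-1) <= N%:R.
Proof.
have := card_monochrome_proper_cols P x01 q_gt0 local_condition [set v] c.
rewrite card_incident1 cards1 expr1; set M := #|_ :&: _|%:R => core.
apply: le_trans core; apply: le_trans (_ : M * q%:R * (1 - x) ^+ hdeg E v <= _).
  apply: ler_wpM2l; first by rewrite mulr_ge0.
  apply: le_trans (bernoulli_ineq _ (ltW x_lt1)); rewrite lerB //.
  apply: le_trans maxdeg_x; apply: ler_wpM2r => //.
  by rewrite ler_nat; exact: (leq_bigmax (F := hdeg E) v).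
by rewrite mulrC [M * _]mulrC mulrA.
Qed.

Let card_proper_cols_lower v c :
  N%:R <= q%:R * #|proper_cols E P :&: monochrome [set v] c|%:R + t^-1 * N%:R.
Proof.
apply: le_trans (_ : (q * #|proper_cols E P :&: monochrome [set v] c|
  + \sum_(e in E | v \in e) #|proper_cols E P :&: monochrome (e :\ v) c|)%:R <= _).
  by rewrite ler_nat card_proper_cols_recolour.
rewrite natrD natrM natr_sum lerD2l.
apply: le_trans (_ : \sum_(e in E | v \in e) x * N%:R <= _).
  by apply: ler_sum => e /andP[eE ve]; exact: card_edge_monochrome.
rewrite sumr_const -[(x * _) *+ _]mulr_natr mulrAC; apply: ler_wpM2r => //; rewrite mulrC.
apply: le_trans maxdeg_x; apply: ler_wpM2r => //; rewrite ler_nat.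
apply: leq_trans (leq_bigmax (F := hdeg E) v).
by apply/eq_leq/eq_card => e; rewrite !inE.
Qed.

Let proper_cols_nonempty : (0 < N)%N.
Proof. exact: (card_proper_cols_gt0 P x01 q_gt0 local_condition x_lt1). Qed.

Lemma prob_colour_ge v c : q%:R^-1 * (1 - t^-1) <= prob_colour R E P v c.
Proof.
have N_gt0 : 0 < N%:R :> R by rewrite ltr0n proper_cols_nonempty.
have q_gt0R : 0 < q%:R :> R by rewrite ltr0n.
rewrite /prob_colour setIdE -monochrome1 ler_pdivlMr // -mulrA ler_pdivrMl //.
by have := card_proper_cols_lower v c; lra.
Qed.

Lemma prob_colour_le v c : prob_colour R E P v c <= q%:R^-1 * (1 + 4 / t).
Proof.
have N_gt0 : 0 < N%:R :> R by rewrite ltr0n proper_cols_nonempty.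
have q_gt0R : 0 < q%:R :> R by rewrite ltr0n.
have t2 := t_ge2; have u_gt0 : 0 < t^-1 by rewrite invr_gt0; lra.
have u_le : t^-1 <= 2^-1 by rewrite lef_pV2 ?posrE //; lra.
rewrite /prob_colour setIdE -monochrome1 ler_pdivrMr // -mulrA ler_pdivlMl //.
have := card_proper_cols_upper v c; set Nc := #|_ :&: _|%:R => upper.
have Nc_ge0 : 0 <= Nc by rewrite ler0n.
have slack : 0 <= t^-1 * (3 - 4 * t^-1) * (q%:R * Nc) by rewrite !mulr_ge0 //; lra.
have : (1 + 4 * t^-1) * (Nc * q%:R * (1 - t^-1)) <= (1 + 4 * t^-1) * N%:R.
  by apply: ler_wpM2l => //; lra.
lra.
Qed.

End MarginalBounds.

Unset Implicit Arguments. Set Strict Implicit.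

Theorem lemma2p5 (R : realType) (V : finType) (q : nat)
    (E : {set {set V}}) (P : {set V} -> {set 'I_q})
    (k' k : nat) (t : R) :
  (2 <= k')%N -> (k' <= k)%N ->
  (forall e, e \in E -> (k' <= #|e| <= k)%N) ->
  k%:R <= t ->
  powR (expR 1 * t * (maxdeg E)%:R) (1 / (k'.-1)%:R) <= q%:R ->
  forall (v : V) (c : 'I_q),
    q%:R^-1 * (1 - t^-1) <= prob_colour R E P v c /\
    prob_colour R E P v c <= q%:R^-1 * (1 + 4 / t).
Proof.
move=> k'_ge2 k'_le_k edge_size k_le_t q_root v c.
have q_gt0 : (0 < q)%N := leq_ltn_trans (leq0n c) (ltn_ord c).
have q_large : expR 1 * t * (maxdeg E)%:R <= q%:R ^+ k'.-1.
  apply: le_exprn_of_powR_root q_root; last by rewrite -ltnS prednK // ltnW.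
  by rewrite !mulr_ge0 ?expR_ge0 ?ler0n // (le_trans (ler0n _ k) k_le_t).
split.
- exact: (prob_colour_ge P k'_ge2 k'_le_k edge_size k_le_t q_gt0 q_large v c).
- exact: (prob_colour_le P k'_ge2 k'_le_k edge_size k_le_t q_gt0 q_large v c).
Qed.
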